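(* Let $B$ be an $(n,k)$-blocker of a convex $n$-gon with vertices $0,\dots,n-1$ (indices mod $n$). If a vertex $i$ is incident to exactly one edge of $B$, namely $(i,j)$, then $B$ contains the ear-cover $(j-1,j+1)$.
   Context: An edge $(i,j)$ is the segment between vertices $i,j$; boundary edges are $(i,i+1)$, diagonals are the other edges. Two edges cross if they share an interior point. A triangulation is a maximal set of pairwise non-crossing diagonals. A blocker is a set $B$ of diagonals having a diagonal in common with every triangulation; it is saturated if for every $e\in B$, $B\setminus\{e\}$ is not a blocker. An $(n,k)$-blocker is a saturated blocker of size $k$. The diagonal $(j-1,j+1)$ is called an ear-cover (it covers $j$). *)

From mathcomp Require Import all_boot.
Set Implicit Arguments. Unset Strict Implicit. Unset Printing Implicit Defensive.

(* Convex n-gon with vertices 'I_n (indices mod n).  An edge {a,b} is encoded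
   as the normalized ordered pair (min a b, max a b). *)

Definition edge n := ('I_n * 'I_n)%type.

Definition mkedge n (a b : 'I_n) : edge n :=
  if (a < b)%N then (a, b) else (b, a).

(* e = (a,b) with a < b is a diagonal: not a boundary edge (i,i+1 mod n) *)
Definition is_diag n (e : edge n) : bool :=
  [&& (e.1 < e.2)%N, e.2 != e.1.+1 :> nat & ~~ ((e.1 == 0 :> nat) && (e.2 == n.-1 :> nat))].

(* two diagonals of a convex polygon share an interior point iff their
   endpoints strictly interleave *)
Definition cross n (e f : edge n) : bool :=
  ((e.1 < f.1 < e.2)%N && (e.2 < f.2)%N) || ((f.1 < e.1 < f.2)%N && (f.2 < e.2)%N).

Definition diag_set n (S : {set edge n}) : bool := [forall e in S, is_diag e].

Definition triangulation n (T : {set edge n}) : bool :=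
  [&& diag_set T,
      [forall e in T, forall f in T, ~~ cross e f] &
      [forall e, (is_diag e && (e \notin T)) ==> [exists f in T, cross e f]]].

Definition blocker n (B : {set edge n}) : bool :=
  diag_set B && [forall T : {set edge n}, triangulation T ==> (B :&: T != set0)].

Definition saturated n (B : {set edge n}) : bool :=
  [forall e in B, ~~ blocker (B :\ e)].

Definition nk_blocker n (k : nat) (B : {set edge n}) : bool :=
  [&& blocker B, saturated B & #|B| == k].

Definition incident n (i : 'I_n) (e : edge n) : bool := (e.1 == i) || (e.2 == i).

Definition ear_cover n (j : 'I_n) : edge n := mkedge (ord_pred j) (ordS j).

(* Saturation of B at (i,j) gives a triangulation T that meets B only in (i,j).
   Flip the fan of T at j: keep the diagonals of T avoiding j, join i to every
   neighbour of j in T or on the boundary, and add the ear-cover of j.  These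
   diagonals do not cross, so they extend to a triangulation T', which meets B in
   some e.  The ear-cover keeps e away from j, hence away from i (the only edge of
   B at i ends at j), hence out of T.  But a diagonal of T' that is neither in T
   nor at i must be the ear-cover: if it separated i from j it would separate i
   from a boundary neighbour x of j, and otherwise it crosses some (j,y) of T and
   then also (i,y); both (i,x) and (i,y) lie in T'. *)

From mathcomp Require Import all_boot zify.
Set Implicit Arguments. Unset Strict Implicit.

Lemma val_ordS n (j : 'I_n) :
  (ordS j = j.+1 :> nat /\ j.+1 < n) \/ (ordS j = 0 :> nat /\ j.+1 = n).
Proof.
rewrite /ordS /=; have := ltn_ord j; rewrite leq_eqVlt => /orP[/eqP E | lt_jn].
  by right; rewrite E modnn.
by left; rewrite modn_small.
Qed.

Lemma val_ord_pred n (j : 'I_n) :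
  (ord_pred j = j.-1 :> nat /\ 0 < j) \/ (ord_pred j = n.-1 :> nat /\ j = 0 :> nat).
Proof.
rewrite /ord_pred /=; have := ltn_ord j; case: (posnP j) => [j0 | j_gt0] lt_jn.
  by right; rewrite j0 add0n modn_small //; lia.
left; split => //; have -> : (j + n).-1 = j.-1 + n by lia.
by rewrite modnDr modn_small //; lia.
Qed.

Lemma ear_cover_cases n (j : 'I_n) : 3 <= n ->
  [/\ ord_pred j = j.-1 :> nat, ordS j = j.+1 :> nat & 0 < j < n.-1]
  \/ [/\ ord_pred j = n.-1 :> nat, ordS j = 1 :> nat & j = 0 :> nat]
  \/ [/\ ord_pred j = n.-2 :> nat, ordS j = 0 :> nat & j = n.-1 :> nat].
Proof.
move=> n_ge3; have := ltn_ord j.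
case: (val_ord_pred j) (val_ordS j) => [[-> ?] | [-> ?]] [[-> ?] | [-> ?]] ?.
- by left; split; lia.
- by right; right; split; lia.
- by right; left; split; lia.
- lia.
Qed.

Lemma ord_eqE n (a b : 'I_n) : (a == b) = (a == b :> nat).
Proof. by []. Qed.

Lemma mkedge1 n (a b : 'I_n) : (mkedge a b).1 = minn a b :> nat.
Proof. by rewrite /mkedge; case: ifP => /= ?; lia. Qed.

Lemma mkedge2 n (a b : 'I_n) : (mkedge a b).2 = maxn a b :> nat.
Proof. by rewrite /mkedge; case: ifP => /= ?; lia. Qed.

Lemma edge_ext n (e f : edge n) : e.1 = f.1 :> nat -> e.2 = f.2 :> nat -> e = f.
Proof. by case: e f => [a b] [c d] /= /val_inj -> /val_inj ->. Qed.

Lemma incident_mkedge n (x a b : 'I_n) : incident x (mkedge a b) = (a == x) || (b == x).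
Proof. by rewrite /mkedge; case: ifP => _ //=; rewrite /incident orbC. Qed.

Lemma diag_incident_mkedge n (x : 'I_n) (e : edge n) :
  is_diag e -> incident x e -> exists y, e = mkedge x y.
Proof.
case: e => a b; rewrite /is_diag /incident /= => /and3P[lt_ab _ _].
by case/orP=> /eqP <-; [exists b | exists a]; rewrite /mkedge ?lt_ab // ltnNge ltnW.
Qed.

Lemma crossC n (e f : edge n) : cross e f = cross f e.
Proof. by rewrite /cross orbC. Qed.

Lemma cross_irr n (e : edge n) : ~~ cross e e.
Proof. by rewrite /cross; lia. Qed.

Lemma cross_diag n (e f : edge n) : cross e f -> is_diag f.
Proof.
have := ltn_ord e.2; have := ltn_ord f.2.
by rewrite /cross /is_diag => ? ? ?; apply/and3P; split; lia.
Qed.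

Lemma diag_n_ge4 n (e : edge n) : is_diag e -> 4 <= n.
Proof. by have := ltn_ord e.1; have := ltn_ord e.2; rewrite /is_diag => ? ? /and3P[]; lia. Qed.

Lemma ear_cover_diag n (j : 'I_n) : 4 <= n -> is_diag (ear_cover j).
Proof.
move=> n_ge4; rewrite /is_diag /ear_cover mkedge1 mkedge2; apply/and3P.
by case: (ear_cover_cases j (ltnW n_ge4)) => [[-> -> ?] | [[-> -> ?] | [-> -> ?]]]; split; lia.
Qed.

Definition separates n (e : edge n) (a b : 'I_n) : bool :=
  [&& ~~ incident a e, ~~ incident b e & (e.1 < a < e.2) != (e.1 < b < e.2)].

Definition neighbour n (j x : 'I_n) : bool := (x == ord_pred j) || (x == ordS j).

Lemma cross_mkedge n (e : edge n) (a b : 'I_n) : cross e (mkedge a b) = separates e a b.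
Proof. by rewrite /cross /separates /incident !ord_eqE mkedge1 mkedge2; apply/idP/idP; lia. Qed.

Lemma separatesC n (e : edge n) (a b : 'I_n) : separates e a b = separates e b a.
Proof. by rewrite /separates; apply/idP/idP; lia. Qed.

Lemma separates_split n (e : edge n) (a b c : 'I_n) :
  ~~ incident b e -> separates e a c -> separates e a b || separates e b c.
Proof. by rewrite /separates /incident; lia. Qed.

Lemma neighbour_neq n (j x : 'I_n) : 3 <= n -> neighbour j x -> x != j.
Proof.
move=> n_ge3; rewrite /neighbour !ord_eqE.
by case: (ear_cover_cases j n_ge3) => [[-> -> ?] | [[-> -> ?] | [-> -> ?]]]; lia.
Qed.

Lemma neighbour_nosep n (j x : 'I_n) (e : edge n) : 3 <= n -> neighbour j x -> ~~ separates e j x.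
Proof.
move=> n_ge3; have := ltn_ord e.2; rewrite /neighbour /separates /incident !ord_eqE.
by case: (ear_cover_cases j n_ge3) => [[-> -> ?] | [[-> -> ?] | [-> -> ?]]]; lia.
Qed.

Lemma cross_ear_cover n (j : 'I_n) (g : edge n) : cross (ear_cover j) g -> incident j g.
Proof.
have := ltn_ord g.2; have := ltn_ord j.
rewrite /cross /incident /ear_cover !ord_eqE mkedge1 mkedge2.
by case: (val_ord_pred j) (val_ordS j) => [[-> ?] | [-> ?]] [[-> ?] | [-> ?]]; lia.
Qed.

Lemma incident_cross_ear_cover n (j : 'I_n) (e : edge n) :
  is_diag e -> incident j e -> cross e (ear_cover j).
Proof.
have := ltn_ord e.2; have := ltn_ord j.
rewrite /cross /incident /is_diag /ear_cover !ord_eqE mkedge1 mkedge2.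
by case: (val_ord_pred j) (val_ordS j) => [[-> ?] | [-> ?]] [[-> ?] | [-> ?]]; lia.
Qed.

Lemma separates_neighbour n (a j : 'I_n) (e : edge n) : 3 <= n -> is_diag e ->
  e != ear_cover j -> separates e a j -> exists2 x, neighbour j x & separates e a x.
Proof.
move=> n_ge3 de ne_ear sep_aj.
suff : separates e a (ord_pred j) || separates e a (ordS j).
  by case/orP; [exists (ord_pred j) | exists (ordS j)]; rewrite /neighbour ?eqxx ?orbT.
have ne_ear' : (e.1 != (ear_cover j).1 :> nat) || (e.2 != (ear_cover j).2 :> nat).
  by apply: contraR ne_ear; rewrite negb_or !negbK => /andP[/eqP ? /eqP ?]; apply/eqP/edge_ext.
move: de ne_ear' sep_aj; have := ltn_ord e.2.
rewrite /is_diag /separates /incident /ear_cover !ord_eqE mkedge1 mkedge2.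
by case: (ear_cover_cases j n_ge3) => [[-> -> ?] | [[-> -> ?] | [-> -> ?]]]; lia.
Qed.

Definition noncrossing n (X : {set edge n}) : bool :=
  [forall e in X, forall f in X, ~~ cross e f].

Lemma noncrossingP n (X : {set edge n}) :
  reflect {in X &, forall e f, ~~ cross e f} (noncrossing X).
Proof.
apply: (iffP forall_inP) => [H e f eX fX | H e eX]; first by move/forall_inP: (H e eX); apply.
by apply/forall_inP => f fX; apply: H.
Qed.

Lemma triangulation_diag n (T : {set edge n}) : triangulation T -> {in T, forall e, is_diag e}.
Proof. by case/and3P => /forall_inP. Qed.

Lemma triangulation_noncrossing n (T : {set edge n}) :
  triangulation T -> {in T &, forall e f, ~~ cross e f}.
Proof. by case/and3P => _ /noncrossingP. Qed.

Lemma triangulation_maximal n (T : {set edge n}) (e : edge n) :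
  triangulation T -> is_diag e -> e \notin T -> exists2 f, f \in T & cross e f.
Proof.
case/and3P => _ _ /forallP/(_ e) max_T de eT.
by move: max_T; rewrite de eT => /exists_inP.
Qed.

Lemma noncrossing_extend n (S : {set edge n}) :
  diag_set S -> noncrossing S -> exists2 T, triangulation T & S \subset T.
Proof.
move=> dS ncS; pose P (X : {set edge n}) := [&& S \subset X, diag_set X & noncrossing X].
have [|T /and3P[ST dT ncT] T_max] := @arg_maxnP _ S P (fun X => #|X|).
  by rewrite /P subxx dS ncS.
exists T => //; apply/and3P; split => //; apply/forallP => e; apply/implyP => /andP[de eT].
apply: contraNT eT; rewrite negb_exists_in => /forall_inP no_cross.
have : P (e |: T).
  apply/and3P; split; first exact: subset_trans ST (subsetUr _ _).
    by apply/forall_inP => f /setU1P[-> // | fT]; move/forall_inP: dT; apply.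
  apply/noncrossingP => f g /setU1P[-> | fT] /setU1P[-> | gT]; rewrite ?cross_irr //.
  - exact: no_cross.
  - by rewrite crossC; apply: no_cross.
  - by move/noncrossingP: ncT; apply.
by move/T_max; rewrite cardsU1; case: (e \in T) => //=; lia.
Qed.

Lemma blocker_diag n (B : {set edge n}) : blocker B -> {in B, forall e, is_diag e}.
Proof. by case/andP => /forall_inP. Qed.

Lemma blocker_meets n (B T : {set edge n}) :
  blocker B -> triangulation T -> exists2 e, e \in B & e \in T.
Proof.
case/andP => _ /forallP/(_ T) /implyP meets /meets /set0Pn[e].
by rewrite inE => /andP[]; exists e.
Qed.

Lemma saturated_blocker_witness n (B : {set edge n}) (e : edge n) :
  blocker B -> saturated B -> e \in B -> exists2 T, triangulation T & B :&: T = [set e].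
Proof.
move=> blB satB eB; move/forall_inP: satB => /(_ e eB).
have dBe : diag_set (B :\ e).
  by apply/forall_inP => f /setD1P[_ fB]; apply: blocker_diag blB f fB.
rewrite /blocker dBe negb_forall => /existsP[T]; rewrite negb_imply negbK.
case/andP => triT /eqP BeT; exists T => //.
have outside f : f != e -> f \in B -> f \notin T.
  move=> ne_fe fB; apply/negP => fT.
  have : f \in (B :\ e) :&: T by rewrite !inE ne_fe fB fT.
  by rewrite BeT inE.
have [g gB gT] := blocker_meets blB triT.
have ge : g = e by apply/eqP; apply: contraLR gT => ne_ge; exact: outside ne_ge gB.
apply/setP => f; rewrite !inE; have [-> | ne_fe] := eqVneq f e; first by rewrite -ge gB gT.
by apply/negbTE; rewrite negb_and -implybE; apply/implyP; exact: outside ne_fe.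
Qed.

Definition fan_flip n (T : {set edge n}) (i j : 'I_n) : {set edge n} :=
  ear_cover j |: ([set g in T | ~~ incident j g] :|:
    [set mkedge i x | x : 'I_n &
       [&& x != j, is_diag (mkedge i x) & (mkedge j x \in T) || neighbour j x]]).

Section FanFlip.

Variables (n : nat) (T : {set edge n}) (i j : 'I_n).
Hypotheses (n_ge3 : 3 <= n) (triT : triangulation T) (ijT : mkedge i j \in T).

Variant fan_flip_spec (g : edge n) : Prop :=
  | FanFlipEar of g = ear_cover j
  | FanFlipKept of g \in T & ~~ incident j g
  | FanFlipFan x of g = mkedge i x & x != j & (mkedge j x \in T) || neighbour j x.

Lemma fan_flipP g : g \in fan_flip T i j -> fan_flip_spec g.
Proof.
rewrite !inE => /or3P[/eqP -> | /andP[gT njg] | /imsetP[x]]; first exact: FanFlipEar.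
  exact: FanFlipKept.
by rewrite inE => /and3P[ne_xj _ adj] ->; exact: FanFlipFan ne_xj adj.
Qed.

Lemma mem_fan_flip_ear : ear_cover j \in fan_flip T i j.
Proof. by rewrite !inE eqxx. Qed.

Lemma mem_fan_flip_kept g : g \in T -> ~~ incident j g -> g \in fan_flip T i j.
Proof. by move=> gT njg; rewrite !inE gT njg orbT. Qed.

Lemma mem_fan_flip_fan x : x != j -> is_diag (mkedge i x) ->
  (mkedge j x \in T) || neighbour j x -> mkedge i x \in fan_flip T i j.
Proof.
move=> ne_xj dix adj; rewrite !inE; apply/orP; right; apply/orP; right.
by apply: imset_f; rewrite inE ne_xj dix.
Qed.

Let ncT := triangulation_noncrossing triT.

Lemma fan_flip_diag : diag_set (fan_flip T i j).
Proof.
apply/forall_inP => g; rewrite !inE => /or3P[/eqP -> | /andP[gT _] | /imsetP[x]].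
- exact/ear_cover_diag/diag_n_ge4/(triangulation_diag triT ijT).
- exact: triangulation_diag triT g gT.
- by rewrite inE => /and3P[_ dix _] ->.
Qed.

Lemma fan_flip_noncrossing : noncrossing (fan_flip T i j).
Proof.
have ne_ij : i != j.
  apply: contraTneq (triangulation_diag triT ijT) => ->.
  by rewrite /is_diag /mkedge ltnn /= ltnn.
have off_j g : g \in fan_flip T i j -> g != ear_cover j -> ~~ incident j g.
  case/fan_flipP => [-> /eqP // | _ njg _ // | x -> ne_xj _ _].
  by rewrite incident_mkedge negb_or ne_ij ne_xj.
have ear_nocross g : g \in fan_flip T i j -> ~~ cross (ear_cover j) g.
  move=> gS; have [-> | ne_ear] := eqVneq g (ear_cover j); first exact: cross_irr.
  by apply: contra (off_j g gS ne_ear); apply: cross_ear_cover.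
have kept_fan_nocross g x : g \in T -> ~~ incident j g ->
    (mkedge j x \in T) || neighbour j x -> ~~ cross g (mkedge i x).
  move=> gT njg adj; rewrite cross_mkedge; apply/negP.
  case/(separates_split njg)/orP => [sep_ij | sep_jx].
    by move: (ncT gT ijT); rewrite cross_mkedge sep_ij.
  case/orP: adj => [jxT | nx]; first by move: (ncT gT jxT); rewrite cross_mkedge sep_jx.
  by move: sep_jx; apply/negP; exact: neighbour_nosep.
apply/noncrossingP => f g fS gS.
case/fan_flipP: (fS) => [-> | fT njf | x fx _ adj_x]; first exact: ear_nocross gS.
- case/fan_flipP: gS => [-> | gT _ | y -> _ adj_y]; first by rewrite crossC ear_nocross.
  + exact: ncT.
  + exact: kept_fan_nocross.
- case/fan_flipP: gS => [-> | gT njg | y -> _ _]; first by rewrite crossC ear_nocross.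
  + by rewrite crossC fx kept_fan_nocross.
  + by rewrite fx cross_mkedge /separates incident_mkedge eqxx.
Qed.

Variable T' : {set edge n}.
Hypotheses (ncT' : {in T' &, forall e f, ~~ cross e f}) (flipT' : fan_flip T i j \subset T').

Lemma fan_flip_ext_notincident e : e \in T' -> is_diag e -> ~~ incident j e.
Proof.
move=> eT' de; apply: contraNN (ncT' eT' (subsetP flipT' _ mem_fan_flip_ear)).
exact: incident_cross_ear_cover.
Qed.

Lemma fan_flip_ext_new_diag e :
  e \in T' -> is_diag e -> e \notin T -> ~~ incident i e -> e = ear_cover j.
Proof.
move=> eT' de eT nie; have nje := fan_flip_ext_notincident eT' de.
have fan_nosep x : x != j -> (mkedge j x \in T) || neighbour j x -> ~~ separates e i x.
  move=> ne_xj adj; rewrite -cross_mkedge; apply/negP => c.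
  have ixT' : mkedge i x \in T'.
    by apply: (subsetP flipT'); apply: mem_fan_flip_fan ne_xj (cross_diag c) adj.
  by move: (ncT' eT' ixT'); rewrite c.
have [sep_ij | nsep_ij] := boolP (separates e i j).
  apply/eqP/negPn/negP => ne_ear.
  have [x nx sep_ix] := separates_neighbour n_ge3 de ne_ear sep_ij.
  have adj_x : (mkedge j x \in T) || neighbour j x by rewrite nx orbT.
  by rewrite (negbTE (fan_nosep x (neighbour_neq n_ge3 nx) adj_x)) in sep_ix.
have [f fT c] := triangulation_maximal triT de eT.
have jf : incident j f.
  apply: contraTT c => njf; apply: ncT' => //.
  by apply: (subsetP flipT'); exact: mem_fan_flip_kept.
have [y fy] := diag_incident_mkedge (triangulation_diag triT fT) jf.
rewrite fy cross_mkedge in c.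
have ne_yj : y != j by apply: contraTneq c => ->; rewrite /separates eqxx /= !andbF.
have adj_y : (mkedge j y \in T) || neighbour j y by rewrite -fy fT.
have := separates_split nie c.
by rewrite separatesC (negbTE nsep_ij) (negbTE (fan_nosep y ne_yj adj_y)).
Qed.

End FanFlip.

Unset Implicit Arguments.

Theorem mainTheorem10 (n k : nat) (B : {set edge n}) (i j : 'I_n) :
  (3 <= n)%N ->
  nk_blocker k B ->
  mkedge i j \in B ->
  (forall e, e \in B -> incident i e -> e = mkedge i j) ->
  ear_cover j \in B.
Proof.
move=> n_ge3 /and3P[blB satB _] ijB only_ij.
have [T triT BT] := saturated_blocker_witness blB satB ijB.
have ijT : mkedge i j \in T by have := set11 (mkedge i j); rewrite -BT inE => /andP[].
have [T' triT' flipT'] :=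
  noncrossing_extend (fan_flip_diag triT ijT) (fan_flip_noncrossing n_ge3 triT ijT).
have ncT' := triangulation_noncrossing triT'.
have [e eB eT'] := blocker_meets blB triT'.
have de := blocker_diag blB eB.
have ne_e_ij : e != mkedge i j.
  apply: contraTneq (fan_flip_ext_notincident ncT' flipT' eT' de) => ->.
  by rewrite incident_mkedge eqxx orbT.
have nie : ~~ incident i e by apply: contra ne_e_ij => /(only_ij e eB)/eqP.
have eT : e \notin T.
  apply: contra ne_e_ij => eT; have : e \in B :&: T by rewrite inE eB eT.
  by rewrite BT inE.
by rewrite -(fan_flip_ext_new_diag n_ge3 triT ncT' flipT' eT' de eT nie).
Qed.
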